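(* Let $p'$ be a joint distribution of two binary random variables $(D,E)$ with $p'(E=1)>0$ and $p'(E=0)>0$, and let $M',m'$ be real numbers in the feasible region for $p'$, i.e. $\max_{e\in\{0,1\}} p'(D=1\mid E=e)\le M'\le 1$ and $0\le m'\le \min_{e\in\{0,1\}} p'(D=1\mid E=e)$. Then for every $\delta>0$ there exists a joint distribution $p(D,E,U)$, with $D,E$ binary and $U$ categorical (finitely many values), satisfying positivity (i.e. $p(U=u)>0$ implies $p(E=e\mid U=u)>0$ for both $e\in\{0,1\}$), such that, writing $M=\max_{e,u} p(D=1\mid E=e,U=u)$ and $m=\min_{e,u}p(D=1\mid E=e,U=u)$ (over $e\in\{0,1\}$ and $u$ with $p(U=u)>0$): (i) $|M-M'|<\delta$, $|m-m'|<\delta$, and $|p(D=d,E=e)-p'(D=d,E=e)|<\delta$ for all $d,e\in\{0,1\}$; and (ii) simultaneously, $$\bigl|\,p(D_1=1)-\bigl[p(D=1,E=1)+p(E=0)\,m\bigr]\bigr|<\delta \quad\text{and}\quad \bigl|\,p(D_0=1)-\bigl[p(D=1,E=0)+p(E=1)\,M\bigr]\bigr|<\delta,$$ where $p(D_e=1)=\sum_u p(D=1\mid E=e,U=u)\,p(U=u)$ is the counterfactual probability of the outcome under exposure level $e$.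
   Context: Setting: $E$ (exposure) and $D$ (outcome) are binary, $U$ is an unmeasured categorical confounder, and the causal structure is the graph $U\to E$, $U\to D$, $E\to D$, interpreted as a non-parametric structural equation model with independent errors. $D_e$ denotes the counterfactual outcome when the exposure is set to $E=e$; under this model (counterfactual consistency and $D_e\perp E\mid U$) one has $p(D_e=1)=\sum_u p(D=1\mid E=e,U=u)p(U=u)$. The sensitivity parameters are $M=\max_{e,u}p(D=1\mid E=e,U=u)$ and $m=\min_{e,u}p(D=1\mid E=e,U=u)$. For any such model one has the bounds $p(D=1,E=e)+p(E=1-e)\,m\le p(D_e=1)\le p(D=1,E=e)+p(E=1-e)\,M$; the theorem says the lower bound for $p(D_1=1)$ and the upper bound for $p(D_0=1)$ are simultaneously arbitrarily sharp. *)

From mathcomp Require Import all_boot all_order all_algebra.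
From mathcomp Require Import reals.
Set Implicit Arguments. Unset Strict Implicit. Unset Printing Implicit Defensive.
Import Order.TTheory GRing.Theory Num.Theory.
Local Open Scope ring_scope.

(* Convention: D = 1 is encoded as [true], E = 1 as [true]. *)

Section Defs.
Variable R : realType.

(* ---------- observed distribution p'(D,E) : q d e = p'(D=d, E=e) ---------- *)
Definition is_dist2 (q : bool -> bool -> R) : Prop :=
  (forall d e, 0 <= q d e) /\ \sum_(d : bool) \sum_(e : bool) q d e = 1.

Definition margE2 (q : bool -> bool -> R) (e : bool) : R :=
  \sum_(d : bool) q d e.

Definition condD2 (q : bool -> bool -> R) (e : bool) : R :=
  q true e / margE2 q e.

(* ---------- full distribution p(D,E,U), U in 'I_k : p d e u = p(D=d,E=e,U=u) *)
Variable k : nat.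
Implicit Types (p : bool -> bool -> 'I_k -> R).

Definition is_dist3 p : Prop :=
  (forall d e u, 0 <= p d e u) /\
  \sum_(d : bool) \sum_(e : bool) \sum_(u < k) p d e u = 1.

Definition margU p (u : 'I_k) : R := \sum_(d : bool) \sum_(e : bool) p d e u.
Definition margEU p (e : bool) (u : 'I_k) : R := \sum_(d : bool) p d e u.
Definition margE p (e : bool) : R := \sum_(u < k) margEU p e u.
Definition margDE p (d e : bool) : R := \sum_(u < k) p d e u.
Definition condE p (e : bool) (u : 'I_k) : R := margEU p e u / margU p u.
Definition condD p (e : bool) (u : 'I_k) : R := p true e u / margEU p e u.

Definition positivity p : Prop :=
  forall u, 0 < margU p u -> forall e, 0 < condE p e u.

Definition is_maxcond p (M : R) : Prop :=
  (exists e u, 0 < margU p u /\ condD p e u = M) /\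
  (forall e u, 0 < margU p u -> condD p e u <= M).

Definition is_mincond p (m : R) : Prop :=
  (exists e u, 0 < margU p u /\ condD p e u = m) /\
  (forall e u, 0 < margU p u -> m <= condD p e u).

Definition pcf p (e : bool) : R := \sum_(u < k) condD p e u * margU p u.

End Defs.

From mathcomp Require Import all_boot all_order all_algebra.
From mathcomp Require Import reals.
From mathcomp Require Import ring lra.
Set Implicit Arguments. Unset Strict Implicit. Unset Printing Implicit Defensive.
Import Order.TTheory GRing.Theory Num.Theory.
Local Open Scope ring_scope.

(* Take U with two strata, stratum u = e holding all but a fraction eps of the
   units with exposure e, whose outcome keeps the observed rate p'(D=1 | E=e).
   The few units with exposure 1 in stratum 0 get the rate m', those with
   exposure 0 in stratum 1 get M'.  Then the extreme conditional rates are
   exactly M' and m', the observed margins move by at most eps, and since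
     p(D_e=1) - p(D=1,E=e) - p(E=1-e) c = sum_u p(E=1-e,U=u) (p(D=1|E=e,U=u)-c)
   with c the rate given to exposure e in stratum 1-e, only the eps-small
   stratum u = e of the units with exposure 1-e contributes to the gap. *)

Lemma big_ord2 (V : nmodType) (F : 'I_2 -> V) :
  \sum_(u < 2) F u = F ord0 + F ord_max.
Proof. by rewrite big_ord_recr big_ord1; congr (F _ + _); apply: val_inj. Qed.

Definition bern {R : pzRingType} (x : R) (d : bool) : R :=
  if d then x else 1 - x.

Lemma bern_in01 (R : realType) (x : R) d : 0 <= x <= 1 -> 0 <= bern x d <= 1.
Proof. by case: d => //= /andP[x_ge0 x_le1]; apply/andP; split; lra. Qed.

Lemma normr_scaled_diff_le (R : realType) (eps a x y : R) :
  0 <= eps -> 0 <= a <= 1 -> 0 <= x <= 1 -> 0 <= y <= 1 ->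
  `|eps * a * (x - y)| <= eps.
Proof.
move=> eps_ge0 /andP[a_ge0 a_le1] /andP[x_ge0 x_le1] /andP[y_ge0 y_le1].
rewrite -mulrA normrM ger0_norm // ler_piMr // normrM ger0_norm //.
by rewrite mulr_ile1 // ler_norml; apply/andP; split; lra.
Qed.

Section ObservedDistribution.
Variables (R : realType) (q : bool -> bool -> R).
Hypothesis q_dist : is_dist2 q.

Lemma sum_margE2 : \sum_(e : bool) margE2 q e = 1.
Proof. by rewrite /margE2 exchange_big; case: q_dist. Qed.

Lemma margE2_le1 e : margE2 q e <= 1.
Proof.
have [q_ge0 _] := q_dist; have := q_ge0 true (~~ e); have := q_ge0 false (~~ e).
by rewrite -sum_margE2 big_bool /margE2 !big_bool; case: e => /=; lra.
Qed.

Variable e : bool.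
Hypothesis margE2_gt0 : 0 < margE2 q e.

Lemma condD2_in01 : 0 <= condD2 q e <= 1.
Proof.
have [q_ge0 _] := q_dist; have := q_ge0 false e.
rewrite /condD2 divr_ge0 ?(ltW margE2_gt0) //= ler_pdivrMr // mul1r.
by rewrite /margE2 big_bool /=; lra.
Qed.

Lemma dist2_factor d : q d e = margE2 q e * bern (condD2 q e) d.
Proof.
have A_neq0 := lt0r_neq0 margE2_gt0.
rewrite /bern /condD2 mulrC; case: d => /=; first by rewrite divfK.
by rewrite mulrBl mul1r divfK // /margE2 big_bool /=; ring.
Qed.

End ObservedDistribution.

Lemma margU_split (R : realType) (k : nat) (p : bool -> bool -> 'I_k -> R) e u :
  margU p u = margEU p e u + margEU p (~~ e) u.
Proof. by rewrite /margU exchange_big big_bool; case: e; rewrite // addrC. Qed.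

Lemma pcf_sub_bound (R : realType) (k : nat) (p : bool -> bool -> 'I_k -> R)
    e c :
  (forall u, margEU p e u != 0) ->
  pcf p e - (margDE p true e + margE p (~~ e) * c) =
  \sum_(u < k) margEU p (~~ e) u * (condD p e u - c).
Proof.
move=> margEU_neq0; rewrite /pcf /margDE /margE mulr_suml -big_split /= -sumrB.
apply: eq_bigr => u _; rewrite (margU_split p e) /condD mulrDr mulfVK //; ring.
Qed.

Section Mixture.
Variables (R : realType) (k : nat) (w r : bool -> 'I_k -> R).

Definition mixture (d e : bool) (u : 'I_k) : R := w e u * bern (r e u) d.

Lemma margEU_mixture e u : margEU mixture e u = w e u.
Proof. by rewrite /margEU big_bool /mixture /=; ring. Qed.

Hypothesis w_gt0 : forall e u, 0 < w e u.

Lemma margU_mixture_gt0 u : 0 < margU mixture u.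
Proof. by rewrite (margU_split _ true) !margEU_mixture addr_gt0. Qed.

Lemma condD_mixture e u : condD mixture e u = r e u.
Proof.
by rewrite /condD margEU_mixture /mixture /= mulrAC divff ?mul1r ?lt0r_neq0.
Qed.

Lemma positivity_mixture : positivity mixture.
Proof. by move=> u U_gt0 e; rewrite /condE margEU_mixture divr_gt0. Qed.

Lemma is_dist3_mixture :
  (forall e u, 0 <= r e u <= 1) -> \sum_(e : bool) \sum_(u < k) w e u = 1 ->
  is_dist3 mixture.
Proof.
move=> r_in01 w_sum1; split=> [d e u|].
  have /andP[bern_ge0 _] := bern_in01 d (r_in01 e u).
  exact: mulr_ge0 (ltW (w_gt0 e u)) bern_ge0.
rewrite big_bool -big_split -{}w_sum1; apply: eq_bigr => e _.
rewrite -big_split; apply: eq_bigr => u _; rewrite /mixture /=; ring.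
Qed.

Lemma is_maxcond_mixture M e0 u0 :
  r e0 u0 = M -> (forall e u, r e u <= M) -> is_maxcond mixture M.
Proof.
move=> r_e0u0 r_leM; split=> [|e u _]; last by rewrite condD_mixture.
by exists e0, u0; rewrite condD_mixture margU_mixture_gt0.
Qed.

Lemma is_mincond_mixture m e0 u0 :
  r e0 u0 = m -> (forall e u, m <= r e u) -> is_mincond mixture m.
Proof.
move=> r_e0u0 r_gem; split=> [|e u _]; last by rewrite condD_mixture.
by exists e0, u0; rewrite condD_mixture margU_mixture_gt0.
Qed.

Lemma pcf_mixture_sub_bound e c :
  pcf mixture e - (margDE mixture true e + margE mixture (~~ e) * c) =
  \sum_(u < k) w (~~ e) u * (r e u - c).
Proof.
rewrite pcf_sub_bound => [|u]; last by rewrite margEU_mixture gt_eqF.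
by apply: eq_bigr => u _; rewrite margEU_mixture condD_mixture.
Qed.

End Mixture.

Section TwoStrata.
Variables (R : realType) (q : bool -> bool -> R) (M' m' eps : R).

Definition extreme_rate (e : bool) : R := if e then m' else M'.

Definition strata_weight (e : bool) (u : 'I_2) : R :=
  margE2 q e * (if u == e :> nat then 1 - eps else eps).

Definition strata_rate (e : bool) (u : 'I_2) : R :=
  if u == e :> nat then condD2 q e else extreme_rate e.

Definition strata_model : bool -> bool -> 'I_2 -> R :=
  mixture strata_weight strata_rate.

Lemma sum_strata_weight :
  is_dist2 q -> \sum_(e : bool) \sum_(u < 2) strata_weight e u = 1.
Proof.
move=> q_dist; rewrite -(sum_margE2 q_dist); apply: eq_bigr => e _.
by rewrite big_ord2 /strata_weight; case: e => /=; ring.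
Qed.

Hypotheses (margE2_gt0 : forall e, 0 < margE2 q e) (eps_in01 : 0 < eps < 1).

Lemma strata_weight_gt0 e u : 0 < strata_weight e u.
Proof.
have /andP[eps_gt0 eps_lt1] := eps_in01.
by rewrite /strata_weight mulr_gt0 //; case: ifP => _; lra.
Qed.

Lemma margDE_strata_model d e :
  margDE strata_model d e - q d e =
  eps * margE2 q e * (bern (extreme_rate e) d - bern (condD2 q e) d).
Proof.
rewrite /margDE /strata_model /mixture big_ord2 (dist2_factor (margE2_gt0 e)).
by rewrite /strata_weight /strata_rate; case: e => /=; ring.
Qed.

Lemma pcf_strata_model e :
  pcf strata_model e -
    (margDE strata_model true e + margE strata_model (~~ e) * extreme_rate e) =
  eps * margE2 q (~~ e) * (condD2 q e - extreme_rate e).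
Proof.
rewrite (pcf_mixture_sub_bound strata_rate strata_weight_gt0).
by rewrite big_ord2 /strata_weight /strata_rate; case: e => /=; ring.
Qed.

Hypotheses (condD2_leM : forall e, condD2 q e <= M') (M'_le1 : M' <= 1).
Hypotheses (m'_ge0 : 0 <= m') (condD2_gem : forall e, m' <= condD2 q e).

Lemma extreme_rates_le : m' <= M'.
Proof. exact: le_trans (condD2_gem true) (condD2_leM true). Qed.

Lemma extreme_rate_in01 e : 0 <= extreme_rate e <= 1.
Proof.
have m'_le1 := le_trans extreme_rates_le M'_le1.
have M'_ge0 := le_trans m'_ge0 extreme_rates_le.
by rewrite /extreme_rate; case: e => /=; apply/andP.
Qed.

Lemma strata_rate_leM e u : strata_rate e u <= M'.
Proof.
rewrite /strata_rate /extreme_rate; case: ifP => _; first exact: condD2_leM.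
by case: e => //; exact: extreme_rates_le.
Qed.

Lemma strata_rate_gem e u : m' <= strata_rate e u.
Proof.
rewrite /strata_rate /extreme_rate; case: ifP => _; first exact: condD2_gem.
by case: e => //; exact: extreme_rates_le.
Qed.

End TwoStrata.

Theorem theorem1 (R : realType) (q : bool -> bool -> R) (M' m' : R) :
  is_dist2 q ->
  0 < margE2 q true -> 0 < margE2 q false ->
  (forall e, condD2 q e <= M') -> M' <= 1 ->
  0 <= m' -> (forall e, m' <= condD2 q e) ->
  forall delta : R, 0 < delta ->
  exists (k : nat) (p : bool -> bool -> 'I_k -> R) (M m : R),
    [/\ is_dist3 p, positivity p, is_maxcond p M, is_mincond p m &
      [/\ `|M - M'| < delta, `|m - m'| < delta,
          (forall d e, `|margDE p d e - q d e| < delta),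
          `|pcf p true - (margDE p true true + margE p false * m)| < delta &
          `|pcf p false - (margDE p true false + margE p true * M)| < delta]].
Proof.
move=> q_dist A1_gt0 A0_gt0 condD2_leM M'_le1 m'_ge0 condD2_gem delta delta_gt0.
have A_gt0 e : 0 < margE2 q e by case: e.
have A_in01 e : 0 <= margE2 q e <= 1 by rewrite ltW ?margE2_le1.
have condD2_in01 e := condD2_in01 q_dist (A_gt0 e).
have extreme_in01 := extreme_rate_in01 condD2_leM M'_le1 m'_ge0 condD2_gem.
have [eps eps_in01 eps_lt_delta] : exists2 eps : R, 0 < eps < 1 & eps < delta.
  by case: (lerP delta 1) => ?; [exists (delta / 2) | exists (1 / 2)]; lra.
have gap_lt a x y : 0 <= a <= 1 -> 0 <= x <= 1 -> 0 <= y <= 1 ->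
    `|eps * a * (x - y)| < delta.
  move=> *; apply: le_lt_trans eps_lt_delta; apply: normr_scaled_diff_le => //.
  by case/andP: eps_in01 => /ltW.
have w_gt0 := strata_weight_gt0 A_gt0 eps_in01.
have rate_leM := strata_rate_leM condD2_leM condD2_gem.
have rate_gem := strata_rate_gem condD2_leM condD2_gem.
exists 2, (strata_model q M' m' eps), M', m'; split.
- apply: (is_dist3_mixture w_gt0) => [e u|]; last exact: sum_strata_weight.
  by rewrite (le_trans m'_ge0 (rate_gem e u)) (le_trans (rate_leM e u) M'_le1).
- exact: positivity_mixture.
- exact: (is_maxcond_mixture w_gt0 (e0 := false) (u0 := ord_max) _ rate_leM).
- exact: (is_mincond_mixture w_gt0 (e0 := true) (u0 := ord0) _ rate_gem).
split; [by rewrite subrr normr0 | by rewrite subrr normr0 | | |].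
- by move=> d e; rewrite margDE_strata_model // gap_lt ?bern_in01.
- by rewrite (pcf_strata_model M' m' A_gt0 eps_in01 true) gap_lt.
- by rewrite (pcf_strata_model M' m' A_gt0 eps_in01 false) gap_lt.
Qed.
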